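(* The assignment $\epsilon_\Gamma$ described in the context is a well-defined functor $\mathcal{G}(E_{\Gamma_S})\to\mathcal{G}(\Gamma_S)$: it is independent of the E-path representing an E-chain, $\epsilon_\Gamma(\mathfrak c)$ is a morphism of $\mathcal G(\Gamma_S)$ from $\mathfrak e_0$ to $\mathfrak e_n$ for $\mathfrak c=(\mathfrak e_0,\dots,\mathfrak e_n)$, it preserves composition, and it is the identity on objects (so its object map is an order isomorphism). Moreover it commutes with restriction: for every E-chain $\mathfrak c$ with domain $\mathfrak e_0$ and every $h\in E$ with $h\,\omega\, e_0$, $\epsilon_\Gamma(\mathfrak h{\downharpoonleft}\mathfrak c)=\mathfrak h{\downharpoonleft}\epsilon_\Gamma(\mathfrak c)$, where $\mathfrak h=(Sh,hS)$ and the right-hand restriction is $(\rho_{hw},\lambda_{w'h})$ if $\epsilon_\Gamma(\mathfrak c)=(\rho_w,\lambda_{w'})$.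
   Context: Let $S$ be a regular semigroup and $E=E(S)$ its set of idempotents. On $E$: $e\,\omega^l f\iff ef=e$, $e\,\omega^r f\iff fe=e$, $\omega=\omega^l\cap\omega^r$; $\mathscr R,\mathscr L$ are Green's relations; $V(x)$ is the set of inverses of $x$. For $e,f\in E$ and $u\in eSf$ let $\rho(e,u,f)\colon Se\to Sf$, $t\mapsto tu$; for $w\in fSe$ let $\lambda(e,w,f)\colon eS\to fS$, $t\mapsto wt$. The groupoid $\mathcal{G}(\Gamma_S)$ has objects $\mathfrak e:=(Se,eS)$, $e\in E$, and morphisms from $(Se,eS)$ to $(Sf,fS)$ the pairs $(\rho_x,\lambda_{x'}):=(\rho(e,x,f),\lambda(e,x',f))$ with $x'\in V(x)$, $xx'=e$, $x'x=f$; composition $(\rho_x,\lambda_{x'})\ast(\rho_y,\lambda_{y'})=(\rho_{xy},\lambda_{y'x'})$; the restriction of $(\rho_x,\lambda_{x'})\colon\mathfrak e\to\mathfrak f$ to $\mathfrak g$ for $g\,\omega\,e$ is $(\rho_{gx},\lambda_{x'g})$. Let $E_{\Gamma_S}=\{(Se,eS):e\in E\}$, given the biordered-set structure transported from $E$ via $e\mapsto\mathfrak e$ (so $\mathfrak e\,\omega^l\,\mathfrak f$ iff $Se\subseteq Sf$, $\mathfrak e\,\omega^r\,\mathfrak f$ iff $eS\subseteq fS$, basic products $\mathfrak e\mathfrak f=(Sef,efS)$ when defined). An E-path is a finite sequence $(e_0,\dots,e_n)$ in $E$ with $e_{i-1}(\mathscr R\cup\mathscr L)e_i$ for all $i$;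 a vertex $e_i$ ($0<i<n$) is inessential if $e_{i-1}\mathscr R e_i\mathscr R e_{i+1}$ or $e_{i-1}\mathscr L e_i\mathscr L e_{i+1}$. E-chains are the classes of E-paths under the equivalence generated by inserting/deleting inessential vertices. $\mathcal G(E_{\Gamma_S})$ is the groupoid with objects $E_{\Gamma_S}$ and morphisms the E-chains $(\mathfrak e_0,\dots,\mathfrak e_n)$ from $\mathfrak e_0$ to $\mathfrak e_n$, with concatenation as composition. For an E-chain $\mathfrak c=(\mathfrak e_0,\dots,\mathfrak e_n)$ and $h\,\omega\, e_0$, $\mathfrak h{\downharpoonleft}\mathfrak c=\mathfrak h\cdot\mathfrak c:=(\mathfrak h,\mathfrak h_0,\mathfrak h_1,\dots,\mathfrak h_n)$ with $h_0=he_0$ and $h_i=e_ih_{i-1}e_i$. Define $\epsilon_\Gamma$ by $\epsilon_\Gamma(\mathfrak e)=\mathfrak e$ on objects and $\epsilon_\Gamma(\mathfrak e_0,\dots,\mathfrak e_n)=(\rho_w,\lambda_{w'})$ where $w=e_0e_1\cdots e_n$ and $w'=e_ne_{n-1}\cdots e_0$. *)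

From Stdlib Require Import List Relations.
Import ListNotations.
Set Implicit Arguments.

Record RegSemigroup := {
  carrier :> Type;
  mul : carrier -> carrier -> carrier;
  mul_assoc : forall a b c, mul a (mul b c) = mul (mul a b) c;
  regular : forall a, exists b, mul (mul a b) a = a
}.

Section Defs.
Variable S : RegSemigroup.
Local Notation "a * b" := (mul S a b).

Definition idem (e : S) : Prop := e * e = e.

Definition omega_l (e f : S) : Prop := e * f = e.
Definition omega_r (e f : S) : Prop := f * e = e.
Definition omega (e f : S) : Prop := omega_l e f /\ omega_r e f.

(* Green's relations R and L (via principal one-sided ideals of S^1) *)
Definition in_rideal1 (a b : S) : Prop := a = b \/ exists u : S, a = b * u.
Definition in_lideal1 (a b : S) : Prop := a = b \/ exists u : S, a = u * b.
Definition GreenR (a b : S) : Prop := in_rideal1 a b /\ in_rideal1 b a.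
Definition GreenL (a b : S) : Prop := in_lideal1 a b /\ in_lideal1 b a.

Definition is_inverse (x' x : S) : Prop := x * x' * x = x /\ x' * x * x' = x'.

Definition inSe (t e : S) : Prop := exists s : S, t = s * e.
Definition ineS (t e : S) : Prop := exists s : S, t = e * s.
Definition ineSf (t e f : S) : Prop := exists s : S, t = e * s * f.

(* objects (Se, eS): equality of objects *)
Definition obj_eq (e f : S) : Prop :=
  (forall t, inSe t e <-> inSe t f) /\ (forall t, ineS t e <-> ineS t f).

(* Data of a candidate morphism (rho(dom, x, cod), lambda(dom, x', cod)) *)
Record mor := Mor { mdom : S; mcod : S; mx : S; mx' : S }.

Definition is_mor (m : mor) : Prop :=
  idem (mdom m) /\ idem (mcod m) /\
  ineSf (mx m) (mdom m) (mcod m) /\ ineSf (mx' m) (mcod m) (mdom m) /\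
  is_inverse (mx' m) (mx m) /\
  mx m * mx' m = mdom m /\ mx' m * mx m = mcod m.

(* Equality of the pairs (rho, lambda) as maps with domains/codomains:
   rho : S dom -> S cod, t |-> t x ;  lambda : dom S -> cod S, t |-> x' t. *)
Definition mor_eq (m n : mor) : Prop :=
  obj_eq (mdom m) (mdom n) /\ obj_eq (mcod m) (mcod n) /\
  (forall t, inSe t (mdom m) -> t * mx m = t * mx n) /\
  (forall t, ineS t (mdom m) -> mx' m * t = mx' n * t).

Definition mor_comp (m n : mor) : mor :=
  Mor (mdom m) (mcod n) (mx m * mx n) (mx' n * mx' m).

Definition mor_id (e : S) : mor := Mor e e e e.

(* restriction of (rho_x, lambda_x') : e -> f to g (g omega e) *)
Definition mor_restr (g : S) (m : mor) : mor :=
  Mor g (mx' m * g * mx m) (g * mx m) (mx' m * g).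

(* E-paths, represented as (e0, [e1; ...; en]) *)
Definition epath := (S * list S)%type.
Definition full (c : epath) : list S := fst c :: snd c.
Definition elast (c : epath) : S := last (snd c) (fst c).

Fixpoint epath_from (x : S) (l : list S) : Prop :=
  match l with
  | [] => True
  | y :: r => idem y /\ (GreenR x y \/ GreenL x y) /\ epath_from y r
  end.

Definition is_epath (c : epath) : Prop := idem (fst c) /\ epath_from (fst c) (snd c).

Definition inessential_del (c d : epath) : Prop :=
  exists (a b : list S) (x y z : S),
    full c = a ++ [x; y; z] ++ b /\ full d = a ++ [x; z] ++ b /\
    ((GreenR x y /\ GreenR y z) \/ (GreenL x y /\ GreenL y z)).

Definition echain_step (c d : epath) : Prop :=
  is_epath c /\ is_epath d /\ inessential_del c d.

Definition echain_equiv : relation epath := clos_refl_sym_trans epath echain_step.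

(* concatenation of E-chains (assumes elast c = fst d) *)
Definition econcat (c d : epath) : epath := (fst c, snd c ++ snd d).

Fixpoint restr_list (prev : S) (l : list S) : list S :=
  match l with
  | [] => []
  | e :: r => let hi := e * prev * e in hi :: restr_list hi r
  end.

Definition erestr (h : S) (c : epath) : epath :=
  let h0 := h * fst c in (h, h0 :: restr_list h0 (snd c)).

Definition prod_list (x : S) (l : list S) : S := fold_left (mul S) l x.

Definition epsw (c : epath) : S := prod_list (fst c) (snd c).
Definition epsw' (c : epath) : S :=
  match rev (full c) with
  | [] => fst c
  | y :: r => prod_list y r
  end.

Definition eps (c : epath) : mor := Mor (fst c) (elast c) (epsw c) (epsw' c).

End Defs.
Arguments mor_id {S} e.
Arguments mor_restr {S} g m.
Arguments eps {S} c.
Arguments idem {S} e.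
Arguments omega {S} e f.
Arguments elast {S} c.
Arguments econcat {S} c d.
Arguments erestr {S} h c.
Arguments is_epath {S} c.
Arguments echain_equiv {S} _ _.
Arguments mor_eq {S} m n.
Arguments mor_comp {S} m n.
Arguments is_mor {S} m.

From Stdlib Require Import List Relations.
Import ListNotations.

(* For an E-path (e0, ..., en) put w = e0 e1 ... en and w' = en ... e0.  Consecutive
   idempotents e, f of an E-path are R- or L-related, hence efe = e and fef = f; by
   induction along the path, w and w' are mutually inverse with ww' = e0 and w'w = en,
   which makes eps(c) a morphism.  An inessential vertex y between x and z satisfies
   xyz = xz and zyx = zx, so eps is constant on E-chains; composition is concatenation
   of words.  For restriction, the vertices h_i of h|c satisfy h_i = w_i' h w_i, where
   w_i, w_i' are the words of the first i+1 vertices of c, and w_i e_(i+1) w_i' = e0. *)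

Lemma last_cons_default {A : Type} (x d : A) (l : list A) : last (x :: l) d = last l x.
Proof.
  revert x d; induction l as [|y l IH]; intros x d; [reflexivity|].
  change (last (x :: y :: l) d) with (last (y :: l) d).
  now rewrite !IH.
Qed.

Lemma last_app_default {A : Type} (l m : list A) (d : A) :
  last (l ++ m) d = last m (last l d).
Proof.
  revert d; induction l as [|x l IH]; intros d; [reflexivity|].
  simpl app; rewrite !last_cons_default; apply IH.
Qed.

Lemma hd_app_cons_indep {A : Type} (a l m : list A) (x d : A) :
  hd d (a ++ x :: l) = hd d (a ++ x :: m).
Proof. now destruct a. Qed.

Section EpsilonFunctor.
Variable S : RegSemigroup.
Local Notation "a * b" := (mul S a b).

Lemma in_rideal1_idem {a e : S} : idem e -> in_rideal1 S a e -> e * a = a.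
Proof. intros He [->|[u ->]]; [exact He|]. now rewrite mul_assoc, He. Qed.

Lemma in_lideal1_idem {a e : S} : idem e -> in_lideal1 S a e -> a * e = a.
Proof. intros He [->|[u ->]]; [exact He|]. now rewrite <- mul_assoc, He. Qed.

Lemma GreenRL_sym (e f : S) : GreenR S e f \/ GreenL S e f -> GreenR S f e \/ GreenL S f e.
Proof. intros [[H1 H2]|[H1 H2]]; [left|right]; split; assumption. Qed.

Lemma idem_green_sandwich (e f : S) :
  idem e -> idem f -> GreenR S e f \/ GreenL S e f -> e * f * e = e.
Proof.
  intros He Hf [[HR _]|[HL _]].
  - now rewrite <- mul_assoc, (in_rideal1_idem Hf HR), He.
  - now rewrite (in_lideal1_idem Hf HL), He.
Qed.

Lemma inessential_contract (x y z : S) : idem y ->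
  (GreenR S x y /\ GreenR S y z) \/ (GreenL S x y /\ GreenL S y z) -> x * y * z = x * z.
Proof.
  intros Hy [[_ [_ Rzy]]|[[Lxy _] _]].
  - rewrite <- (in_rideal1_idem Hy Rzy) at 2. now rewrite mul_assoc.
  - now rewrite (in_lideal1_idem Hy Lxy).
Qed.

Lemma epath_from_snoc (x y : S) (l : list S) :
  epath_from S x (l ++ [y]) <->
  epath_from S x l /\ idem y /\ (GreenR S (last l x) y \/ GreenL S (last l x) y).
Proof.
  revert x; induction l as [|z l IH]; intros x; simpl app; cbn [epath_from].
  - simpl; tauto.
  - rewrite IH, last_cons_default; tauto.
Qed.

Lemma is_epath_full_idem (c : epath S) : is_epath c -> forall v, In v (full c) -> idem v.
Proof.
  destruct c as [x l]; unfold is_epath, full; simpl; intros [Hx Hl].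
  revert x Hx Hl; induction l as [|y l IH]; intros x Hx Hl v [<-|Hv]; auto.
  - destruct Hv.
  - destruct Hl as [Hy [_ Hl]]. exact (IH y Hy Hl v Hv).
Qed.

(* The default [d] is only returned on the empty list, which never occurs below. *)
Definition prod_seq (d : S) (l : list S) : S :=
  match l with [] => d | f :: s => fold_left (mul S) s f end.

Lemma epsw_prod_seq (c : epath S) : epsw c = prod_seq (fst c) (full c).
Proof. reflexivity. Qed.

Lemma epsw'_prod_seq (c : epath S) : epsw' c = prod_seq (fst c) (rev (full c)).
Proof. unfold epsw'. now destruct (rev (full c)). Qed.

Lemma fold_left_mul_assoc (a b : S) (l : list S) :
  fold_left (mul S) l (a * b) = a * fold_left (mul S) l b.
Proof.
  revert b; induction l as [|z l IH]; intros b; [reflexivity|].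
  simpl. rewrite <- mul_assoc. apply IH.
Qed.

Lemma prod_seq_cons (d y : S) (l : list S) : l <> [] -> prod_seq d (y :: l) = y * prod_seq d l.
Proof. destruct l as [|z l]; [congruence|]. intros _. apply fold_left_mul_assoc. Qed.

Lemma prod_seq_contract (d x y z : S) (a b : list S) : x * y * z = x * z ->
  prod_seq d (a ++ [x; y; z] ++ b) = prod_seq d (a ++ [x; z] ++ b).
Proof.
  intros H. destruct a as [|f a]; simpl.
  - now rewrite H.
  - rewrite !fold_left_app; simpl.
    now rewrite <- !(mul_assoc S (fold_left (mul S) a f)), H.
Qed.

Lemma eps_inessential_del (c d : epath S) : echain_step c d -> eps c = eps d.
Proof.
  intros [Hc [_ [a [b [x [y [z [Ec [Ed Hg]]]]]]]]].
  assert (Hy : idem y).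
  { apply (is_epath_full_idem c Hc). rewrite Ec. apply in_or_app. simpl; auto. }
  assert (Hfst : fst c = fst d).
  { change (hd (fst c) (full c) = hd (fst c) (full d)).
    rewrite Ec, Ed. apply hd_app_cons_indep. }
  assert (Hlast : elast c = elast d).
  { unfold elast. rewrite <- (last_cons_default (fst c) (fst c)),
      <- (last_cons_default (fst d) (fst c)).
    change (last (full c) (fst c) = last (full d) (fst c)).
    rewrite Ec, Ed, !last_app_default. reflexivity. }
  assert (Hrev : (GreenR S z y /\ GreenR S y x) \/ (GreenL S z y /\ GreenL S y x)).
  { destruct Hg as [[[? ?] [? ?]]|[[? ?] [? ?]]]; [left|right]; split; split; assumption. }
  unfold eps. f_equal; [exact Hfst | exact Hlast | |].
  - rewrite !epsw_prod_seq, Ec, Ed, Hfst.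
    apply prod_seq_contract, inessential_contract; assumption.
  - rewrite !epsw'_prod_seq, Ec, Ed, Hfst, !rev_app_distr, <- !app_assoc.
    apply (prod_seq_contract _ z y x (rev b) (rev a)), inessential_contract; assumption.
Qed.

Lemma eps_echain_equiv (c d : epath S) : echain_equiv c d -> eps c = eps d.
Proof.
  induction 1 as [c d Hs | c | c d _ IH | c d e _ IH1 _ IH2].
  - now apply eps_inessential_del.
  - reflexivity.
  - now symmetry.
  - congruence.
Qed.

Lemma epsw_snoc (x y : S) (l : list S) : epsw (x, l ++ [y]) = epsw (x, l) * y.
Proof. unfold epsw, prod_list; simpl. now rewrite fold_left_app. Qed.

Lemma epsw'_snoc (x y : S) (l : list S) : epsw' (x, l ++ [y]) = y * epsw' (x, l).
Proof.
  rewrite !epsw'_prod_seq; simpl fst; unfold full; simpl snd.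
  rewrite app_comm_cons, rev_unit. apply prod_seq_cons.
  simpl. now destruct (rev l).
Qed.

Record word_spec (x : S) (l : list S) : Prop := {
  word_last : epsw (x, l) * last l x = epsw (x, l);
  last_word' : last l x * epsw' (x, l) = epsw' (x, l);
  word_word' : epsw (x, l) * epsw' (x, l) = x;
  word'_word : epsw' (x, l) * epsw (x, l) = last l x;
  first_word : x * epsw (x, l) = epsw (x, l);
  word'_first : epsw' (x, l) * x = epsw' (x, l);
  last_idem : idem (last l x) }.

Lemma word_sandwich (x y : S) (l : list S) : word_spec x l -> idem y ->
  GreenR S (last l x) y \/ GreenL S (last l x) y -> epsw (x, l) * y * epsw' (x, l) = x.
Proof.
  intros [Hw Hw' Hww' _ _ _ He] Hy Hr.
  rewrite <- Hw, <- Hw'.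
  transitivity (epsw (x, l) * (last l x * y * last l x) * epsw' (x, l)).
  { now rewrite !mul_assoc. }
  now rewrite idem_green_sandwich, Hw.
Qed.

Lemma word_spec_snoc (x y : S) (l : list S) : word_spec x l -> idem y ->
  GreenR S (last l x) y \/ GreenL S (last l x) y -> word_spec x (l ++ [y]).
Proof.
  intros Hs Hy Hr. pose proof Hs as [_ _ _ Hw'w Hxw Hw'x He].
  constructor; rewrite ?last_last, ?epsw_snoc, ?epsw'_snoc.
  - now rewrite <- mul_assoc, Hy.
  - now rewrite mul_assoc, Hy.
  - rewrite mul_assoc, <- (mul_assoc S (epsw (x, l)) y y), Hy.
    now apply word_sandwich.
  - rewrite <- mul_assoc, (mul_assoc S (epsw' (x, l))), Hw'w, mul_assoc.
    now apply idem_green_sandwich, GreenRL_sym.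
  - now rewrite mul_assoc, Hxw.
  - now rewrite <- mul_assoc, Hw'x.
  - exact Hy.
Qed.

Lemma epath_word_spec (x : S) (l : list S) : idem x -> epath_from S x l -> word_spec x l.
Proof.
  intros Hx. induction l as [|y l IH] using rev_ind; intros Hl.
  - unfold idem in Hx. constructor; simpl; unfold epsw, prod_list; simpl; auto.
  - apply epath_from_snoc in Hl as [Hl [Hy Hr]].
    now apply word_spec_snoc; [apply IH|..].
Qed.

Lemma eps_is_mor (c : epath S) : is_epath c -> is_mor (eps c).
Proof.
  destruct c as [x l]; intros [Hx Hl]; simpl in Hx, Hl.
  destruct (epath_word_spec x l Hx Hl) as [Hw Hw' Hww' Hw'w Hxw Hw'x He].
  unfold is_mor, eps, elast; simpl.
  repeat split; try assumption.
  - exists (epsw (x, l)). now rewrite Hxw, Hw.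
  - exists (epsw' (x, l)). now rewrite Hw', Hw'x.
  - now rewrite Hww', Hxw.
  - now rewrite Hw'w, Hw'.
Qed.

Lemma epsw_app (x : S) (l m : list S) : epsw (x, l) * last l x = epsw (x, l) ->
  epsw (x, l ++ m) = epsw (x, l) * epsw (last l x, m).
Proof.
  intros H. unfold epsw, prod_list; simpl.
  rewrite fold_left_app, <- fold_left_mul_assoc. now f_equal.
Qed.

Lemma epsw'_app (x : S) (l m : list S) : last l x * epsw' (x, l) = epsw' (x, l) ->
  epsw' (x, l ++ m) = epsw' (last l x, m) * epsw' (x, l).
Proof.
  intros H. induction m as [|z m IH] using rev_ind.
  - now rewrite app_nil_r.
  - now rewrite app_assoc, !epsw'_snoc, IH, mul_assoc.
Qed.

Lemma eps_econcat (c d : epath S) : is_epath c -> elast c = fst d ->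
  eps (econcat c d) = mor_comp (eps c) (eps d).
Proof.
  destruct c as [x l], d as [y m]; intros [Hx Hl]; unfold elast; simpl; intros <-.
  destruct (epath_word_spec x l Hx Hl) as [Hw Hw' _ _ _ _ _].
  unfold econcat, eps, mor_comp, elast; simpl.
  now rewrite epsw_app, epsw'_app, last_app_default.
Qed.

Lemma restr_list_snoc (p y : S) (l : list S) :
  restr_list S p (l ++ [y]) = restr_list S p l ++ [y * last (restr_list S p l) p * y].
Proof.
  revert p; induction l as [|e l IH]; intros p; [reflexivity|].
  simpl. now rewrite IH, <- (last_cons_default (e * p * e) p).
Qed.

Lemma restr_list_words (x h : S) (l : list S) :
  idem x -> idem h -> omega h x -> epath_from S x l ->
  last (restr_list S h l) h = epsw' (x, l) * h * epsw (x, l) /\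
  epsw (h, h :: restr_list S h l) = h * epsw (x, l) /\
  epsw' (h, h :: restr_list S h l) = epsw' (x, l) * h.
Proof.
  intros Hx Hh [Hhx Hxh]. unfold idem in Hh; unfold omega_l in Hhx; unfold omega_r in Hxh.
  induction l as [|y l IH] using rev_ind; intros Hl.
  - cbn; unfold epsw, prod_list; simpl.
    now rewrite Hxh, Hhx, Hh.
  - pose proof (epath_from_snoc x y l) as [Hsnoc _].
    destruct (Hsnoc Hl) as [Hl' [Hy Hr]].
    destruct (IH Hl') as [Hlast [Hw Hw']].
    pose proof (word_sandwich x y l (epath_word_spec x l Hx Hl') Hy Hr) as Hsand.
    rewrite restr_list_snoc, last_last, epsw_snoc, epsw'_snoc, app_comm_cons,
      epsw_snoc, epsw'_snoc, Hlast, Hw, Hw'.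
    repeat split.
    + now rewrite !mul_assoc.
    + transitivity (h * (epsw (x, l) * y * epsw' (x, l)) * h * epsw (x, l) * y).
      { now rewrite !mul_assoc. }
      now rewrite Hsand, Hhx, Hh, !mul_assoc.
    + transitivity (y * epsw' (x, l) * h * (epsw (x, l) * y * epsw' (x, l)) * h).
      { now rewrite !mul_assoc. }
      now rewrite Hsand, <- (mul_assoc S _ x h), Hxh, <- (mul_assoc S _ h h), Hh.
Qed.

Lemma eps_erestr (c : epath S) (h : S) : is_epath c -> idem h -> omega h (fst c) ->
  eps (erestr h c) = mor_restr h (eps c).
Proof.
  destruct c as [x l]; intros [Hx Hl] Hh Hhx; simpl in *.
  destruct (restr_list_words x h l Hx Hh Hhx Hl) as [Hlast [Hw Hw']].
  destruct Hhx as [Hhx _]; unfold omega_l in Hhx.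
  unfold erestr, eps, mor_restr, elast; cbn [fst snd mx mx'].
  now rewrite Hhx, last_cons_default, Hw, Hw', Hlast.
Qed.

Lemma mor_eq_refl (m : mor S) : mor_eq m m.
Proof. repeat split; auto. Qed.

End EpsilonFunctor.

Theorem mainTheorem4 (S : RegSemigroup) :
  (forall c d : epath S, is_epath c -> is_epath d -> echain_equiv c d ->
     mor_eq (eps c) (eps d)) /\
  (forall c : epath S, is_epath c ->
     is_mor (eps c) /\ mdom (eps c) = fst c /\ mcod (eps c) = elast c) /\
  (forall e : S, idem e -> mor_eq (eps (e, [])) (mor_id e)) /\
  (forall c d : epath S, is_epath c -> is_epath d -> elast c = fst d ->
     mor_eq (eps (econcat c d)) (mor_comp (eps c) (eps d))) /\
  (forall (c : epath S) (h : S), is_epath c -> idem h -> omega h (fst c) ->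
     mor_eq (eps (erestr h c)) (mor_restr h (eps c))).
Proof.
  split; [|split; [|split; [|split]]].
  - intros c d _ _ Hcd. rewrite (eps_echain_equiv S c d Hcd). apply mor_eq_refl.
  - intros c Hc. split; [now apply eps_is_mor | split; reflexivity].
  - intros e _. apply mor_eq_refl.
  - intros c d Hc _ Hcd. rewrite (eps_econcat S c d Hc Hcd). apply mor_eq_refl.
  - intros c h Hc Hh Hhc. rewrite (eps_erestr S c h Hc Hh Hhc). apply mor_eq_refl.
Qed.
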